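(* Let $H$ be a hyperfield and let $X=\operatorname{Spec}A$ be an affine scheme, $A$ a commutative ring. Then there is a natural bijection of sets $$\operatorname{Hom}(A,H)\;=\;\operatorname{Hom}_{\mathfrak{Lhs}}(\operatorname{Spec}H,X),$$ where the left side is the set of hyperring homomorphisms $A\to H$ and the right side is the set of morphisms of locally hyperringed spaces. (A homomorphism $f:A\to H$ corresponds to the point $\ker f\in X$ together with the induced homomorphism $k(\ker f)=\operatorname{Frac}(A/\ker f)\to H$; conversely a morphism induces the map on global sections $A\to H$.)
   Context: A hyperoperation on a set $H$ is a map from $H\times H$ to the set of nonempty subsets of $H$; for subsets $A,B$ one writes $A+B=\bigcup_{a\in A,b\in B}a+b$. A canonical hypergroup is a set with a commutative, associative hyperoperation $+$ and an element $0$ with $0+x=\{x\}$, such that each $x$ has a unique $-x$ with $0\in x+(-x)$, and $x\in y+z$ implies $z\in x+(-y)$. A hyperring is a set $R$ with a hyperaddition making it a canonical hypergroup and a multiplication making $(R,\cdot,1)$ a commutative monoid, with $x(y+z)=xy+xz$ and $x\cdot0=0$; a hyperfield is a hyperring whose nonzero elements are multiplicatively invertible. A homomorphism of hyperrings $f$ satisfies $f(0)=0$, $f(1)=1$, $f(xy)=f(x)f(y)$, $f(x+y)\subseteq f(x)+f(y)$. For a hyperfield $H$, $\operatorname{Spec}H$ is the one-point space $\{y\}$ with structure sheaf having $H$ as sections over $\{y\}$ (its unique prime/maximal ideal is $\{0\}$). A locally hyperringed space is a topological space with a sheaf of hyperrings whose stalks exist (as colimits of hyperrings) and each have a unique maximal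 ideal; morphisms are pairs $(f,f^\#)$ of a continuous map and a morphism of sheaves of hyperrings $\mathcal O_Y\to f_*\mathcal O_X$ with local stalk maps (preimage of the maximal ideal is the maximal ideal). $\mathfrak{Lhs}$ denotes the category of locally hyperringed spaces; schemes are regarded as objects of it. *)

From HB Require Import structures.
From mathcomp Require Import all_boot all_algebra.
From Stdlib Require Import Ring FunctionalExtensionality PropExtensionality.
Set Implicit Arguments.
Unset Strict Implicit.
Unset Printing Implicit Defensive.
Import GRing.Theory.

(* Raw hyperring data: [hr_add x y z] means  z \in x + y. *)
Record HRData := {
  hr_car :> Type;
  hr_add : hr_car -> hr_car -> hr_car -> Prop;
  hr_zero : hr_car;
  hr_one : hr_car;
  hr_mul : hr_car -> hr_car -> hr_car }.

Arguments hr_add {h}.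
Arguments hr_zero {h}.
Arguments hr_one {h}.
Arguments hr_mul {h}.

(* Canonical hypergroup + commutative monoid + distributivity + x*0 = 0. *)
Definition is_hyperring (R : HRData) : Prop :=
  (forall x y : R, exists z, hr_add x y z) /\
  (forall x y z : R, hr_add x y z -> hr_add y x z) /\
  (* associativity (x + y) + z = x + (y + z) as sets *)
  (forall x y z w : R,
     (exists u, hr_add x y u /\ hr_add u z w) <->
     (exists u, hr_add y z u /\ hr_add x u w)) /\
  (forall x z : R, hr_add hr_zero x z <-> z = x) /\
  (forall x : R, exists! y : R, hr_add x y hr_zero) /\
  (forall x y z y' : R, hr_add y y' hr_zero -> hr_add y z x -> hr_add x y' z) /\
  (forall x y z : R, hr_mul x (hr_mul y z) = hr_mul (hr_mul x y) z) /\
  (forall x y : R, hr_mul x y = hr_mul y x) /\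
  (forall x : R, hr_mul hr_one x = x) /\
  (forall x y z w : R,
     (exists u, hr_add y z u /\ w = hr_mul x u) <-> hr_add (hr_mul x y) (hr_mul x z) w) /\
  (forall x : R, hr_mul x hr_zero = hr_zero).

Definition is_hyperfield (H : HRData) : Prop :=
  is_hyperring H /\ (hr_one : H) <> hr_zero /\
  (forall x : H, x <> hr_zero -> exists y, hr_mul x y = hr_one).

Definition is_hr_hom (R S : HRData) (f : R -> S) : Prop :=
  f hr_zero = hr_zero /\ f hr_one = hr_one /\
  (forall x y, f (hr_mul x y) = hr_mul (f x) (f y)) /\
  (forall x y z, hr_add x y z -> hr_add (f x) (f y) (f z)).

Definition hr_unit (R : HRData) (x : R) : Prop := exists y, hr_mul x y = hr_one.

Definition ring_hrd (A : comPzRingType) : HRData :=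
  {| hr_car := A; hr_add := fun x y z => z = (x + y)%R;
     hr_zero := 0%R; hr_one := 1%R; hr_mul := fun x y => (x * y)%R |}.

(* Pointwise hyperring of functions from a proposition P to H
   (sections of the structure sheaf of Spec H over an open V: P := "y \in V"). *)
Definition fun_hrd (P : Prop) (H : HRData) : HRData :=
  {| hr_car := P -> H;
     hr_add := fun s t u => forall h : P, hr_add (s h) (t h) (u h);
     hr_zero := fun _ => hr_zero; hr_one := fun _ => hr_one;
     hr_mul := fun s t h => hr_mul (s h) (t h) |}.

(* A topological space (open subsets given by [hs_open]) with a presheaf of
   hyperrings: [hs_sec U] are the sections over U (only meaningful for open U)
   and [hs_res] the restriction maps. *)
Record HSpace := {
  hs_pt : Type;
  hs_open : (hs_pt -> Prop) -> Prop;
  hs_sec : forall U : hs_pt -> Prop, hs_open U -> HRData;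
  hs_res : forall (U V : hs_pt -> Prop) (hU : hs_open U) (hV : hs_open V),
             (forall x, V x -> U x) -> hs_sec hU -> hs_sec hV }.

Arguments hs_open {h}.
Arguments hs_res {h}.
Arguments hs_sec : clear implicits.

(* The germ of s in O(U) at z (z \in U) is a unit of the stalk at z. *)
Definition unit_near (X : HSpace) (U : hs_pt X -> Prop) (z : hs_pt X)
  (hU : hs_open U) (s : hs_sec X U hU) : Prop :=
  exists (W : hs_pt X -> Prop) (hW : hs_open W) (hWU : forall x, W x -> U x),
    W z /\ hr_unit (hs_res U W hU hW hWU s).
Arguments unit_near : clear implicits.

(* Morphisms Y -> X of locally hyperringed spaces: a continuous map f with a
   morphism of sheaves of hyperrings O_X -> f_* O_Y whose stalk maps are local. *)
Unset Implicit Arguments.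
Record LhsHom (Y X : HSpace) := {
  mor_pt : hs_pt Y -> hs_pt X;
  mor_cont : forall U, hs_open U -> hs_open (fun y => U (mor_pt y));
  (* the sheaf map O_X(U) -> (f_* O_Y)(U) = O_Y(f^-1 U) *)
  mor_sh : forall U (hU : hs_open U),
             hs_sec X U hU -> hs_sec Y (fun y => U (mor_pt y)) (@mor_cont U hU);
  mor_hom : forall U (hU : hs_open U), is_hr_hom (@mor_sh U hU);
  mor_nat : forall U V (hU : hs_open U) (hV : hs_open V)
              (hVU : forall x, V x -> U x) (s : hs_sec X U hU),
      @mor_sh V hV (hs_res U V hU hV hVU s) =
      hs_res (fun y => U (mor_pt y)) (fun y => V (mor_pt y))
             (@mor_cont U hU) (@mor_cont V hV)
             (fun y => hVU (mor_pt y)) (@mor_sh U hU s);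
  (* locality: at each y the stalk map O_{X,f y} -> O_{Y,y} pulls back the
     maximal ideal (= non-units) to the maximal ideal *)
  mor_local : forall (y : hs_pt Y) U (hU : hs_open U) (s : hs_sec X U hU),
      U (mor_pt y) ->
      (unit_near X U (mor_pt y) hU s <->
       unit_near Y (fun y' => U (mor_pt y')) y (@mor_cont U hU) (@mor_sh U hU s)) }.
Set Implicit Arguments.
Arguments mor_pt {Y X}.
Arguments mor_cont {Y X} m {U} : rename.
Arguments mor_sh {Y X} m {U} hU : rename.


Definition SpecH (H : HRData) : HSpace :=
  {| hs_pt := unit;
     hs_open := fun _ => True;
     hs_sec := fun V _ => fun_hrd (V tt) H;
     hs_res := fun U V _ _ hVU (s : fun_hrd (U tt) H) =>
                 (fun hv : V tt => s (hVU tt hv)) : fun_hrd (V tt) H |}.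

Local Open Scope ring_scope.

Section SpecRing.
Variable A : comPzRingType.

Lemma A_ring_th : ring_theory (0 : GRing.PzSemiRing.sort A) 1 +%R *%R (fun x y => x - y) -%R eq.
Proof.
split.
- exact: add0r.
- exact: addrC.
- exact: addrA.
- exact: mul1r.
- exact: mulrC.
- exact: mulrA.
- exact: mulrDl.
- by [].
- exact: subrr.
Qed.
Add Ring A_ring : A_ring_th.
Ltac aring := match goal with |- @eq _ ?x ?y => change (@eq (GRing.PzSemiRing.sort A) x y) end; ring.
Lemma A_ring_th' : @ring_theory (GRing.ComPzRing.sort A) 0 1 +%R *%R (fun x y => x - y) -%R eq.
Proof. exact: A_ring_th. Qed.


Definition prime_ideal (P : A -> Prop) : Prop :=
  P 0 /\ (forall x y, P x -> P y -> P (x + y)) /\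
  (forall a x, P x -> P (a * x)) /\ ~ P 1 /\
  (forall x y, P (x * y) -> P x \/ P y).

Definition SpecPt := {P : A -> Prop | prime_ideal P}.

(* Zariski opens: unions of basic opens D(s) = {p | s \notin p}. *)
Definition zar_open (U : SpecPt -> Prop) : Prop :=
  exists S : A -> Prop, forall p : SpecPt, U p <-> exists s, S s /\ ~ sval p s.

(* Localization A_p: an element is the equivalence class of a fraction a/f,
   represented as the predicate of all fractions equal to it. *)
Definition frac_eqv (p : SpecPt) (x y : A * A) : Prop :=
  ~ sval p x.2 /\ ~ sval p y.2 /\
  exists u, ~ sval p u /\ u * (x.1 * y.2 - y.1 * x.2) = 0.

Definition cls (p : SpecPt) (a f : A) : A * A -> Prop := frac_eqv p (a, f).

Definition addC (p : SpecPt) (C D : A * A -> Prop) : A * A -> Prop :=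
  fun x => exists a f b g, C (a, f) /\ D (b, g) /\ frac_eqv p (a * g + b * f, f * g) x.
Definition mulC (p : SpecPt) (C D : A * A -> Prop) : A * A -> Prop :=
  fun x => exists a f b g, C (a, f) /\ D (b, g) /\ frac_eqv p (a * b, f * g) x.

(* Structure sheaf: s \in O(U) iff s assigns to each p \in U an element of A_p,
   locally of the form a/f (on a basic neighbourhood D(h) of p inside U). *)
Definition locfrac (U : SpecPt -> Prop) (s : forall p : SpecPt, U p -> A * A -> Prop) :=
  forall p (hp : U p), exists h a f, ~ sval p h /\
    forall q : SpecPt, ~ sval q h ->
      U q /\ ~ sval q f /\ forall hq : U q, s q hq = cls q a f.

Definition SecA (U : SpecPt -> Prop) := {s | @locfrac U s}.

Lemma prime_mul (p : SpecPt) x y : ~ sval p x -> ~ sval p y -> ~ sval p (x * y).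
Proof. case: p => P [_ [_ [_ [_ H]]]] /= hx hy /H []; tauto. Qed.

Lemma prime_mulL (p : SpecPt) x y : ~ sval p (x * y) -> ~ sval p x.
Proof. case: p => P [_ [_ [H _]]] /= hxy hx; apply: hxy; rewrite mulrC; exact: H. Qed.

Lemma prime_mulR (p : SpecPt) x y : ~ sval p (x * y) -> ~ sval p y.
Proof. case: p => P [_ [_ [H _]]] /= hxy hy; exact/hxy/H. Qed.

Lemma prime_one (p : SpecPt) : ~ sval p 1.
Proof. by case: p => P [? [? [? [H ?]]]]. Qed.

Lemma eqv_refl p a f : ~ sval p f -> frac_eqv p (a, f) (a, f).
Proof.
move=> hf; split=> //; split=> //; exists 1; split; first exact: prime_one.
rewrite /=; aring.
Qed.

Lemma eqv_sym p x y : frac_eqv p x y -> frac_eqv p y x.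
Proof.
move=> [hx [hy [u [hu e]]]]; split=> //; split=> //; exists u; split=> //.
transitivity (- (u * (x.1 * y.2 - y.1 * x.2))); first aring.
by rewrite e oppr0.
Qed.

Lemma eqv_trans p x y z : frac_eqv p x y -> frac_eqv p y z -> frac_eqv p x z.
Proof.
move=> [hx [hy [u [hu e1]]]] [_ [hz [v [hv e2]]]]; split=> //; split=> //.
exists (u * v * y.2); split; first by apply: prime_mul => //; apply: prime_mul.
transitivity (v * z.2 * (u * (x.1 * y.2 - y.1 * x.2)) +
              u * x.2 * (v * (y.1 * z.2 - z.1 * y.2))); first aring.
by rewrite e1 e2 !mulr0 addr0.
Qed.

Lemma eqv_mul p a f b g a' f' b' g' :
  frac_eqv p (a, f) (a', f') -> frac_eqv p (b, g) (b', g') ->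
  frac_eqv p (a * b, f * g) (a' * b', f' * g').
Proof.
move=> [hf [hf' [u [hu e1]]]] [hg [hg' [v [hv e2]]]] /=.
split; first exact: prime_mul. split; first exact: prime_mul.
exists (u * v); split; first exact: prime_mul.
simpl in e1, e2.
rewrite /=; transitivity (v * b * g' * (u * (a * f' - a' * f)) +
              u * a' * f * (v * (b * g' - b' * g))); first aring.
by rewrite e1 e2 !mulr0 addr0.
Qed.

Lemma eqv_add p a f b g a' f' b' g' :
  frac_eqv p (a, f) (a', f') -> frac_eqv p (b, g) (b', g') ->
  frac_eqv p (a * g + b * f, f * g) (a' * g' + b' * f', f' * g').
Proof.
move=> [hf [hf' [u [hu e1]]]] [hg [hg' [v [hv e2]]]] /=.
split; first exact: prime_mul. split; first exact: prime_mul.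
exists (u * v); split; first exact: prime_mul.
simpl in e1, e2.
rewrite /=; transitivity (v * g * g' * (u * (a * f' - a' * f)) +
              u * f * f' * (v * (b * g' - b' * g))); first aring.
by rewrite e1 e2 !mulr0 addr0.
Qed.

Lemma mulC_cls p a f b g : ~ sval p f -> ~ sval p g ->
  mulC p (cls p a f) (cls p b g) = cls p (a * b) (f * g).
Proof.
move=> hf hg; apply: functional_extensionality => x.
apply: propositional_extensionality; split.
- move=> [a' [f' [b' [g' [h1 [h2 h3]]]]]].
  exact: eqv_trans (eqv_mul h1 h2) h3.
- move=> h; exists a, f, b, g; split; first exact: eqv_refl.
  by split; first exact: eqv_refl.
Qed.

Lemma locfrac_const U (hU : zar_open U) (a : A) : @locfrac U (fun q _ => cls q a 1).
Proof.
move=> p hp; case: hU => S HS; case: (proj1 (HS p) hp) => h [Sh hph].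
exists h, a, 1; split=> // q hq; split; first by apply/HS; exists h.
by split=> //; apply: prime_one.
Qed.

Lemma locfrac_mul U s t : @locfrac U s -> @locfrac U t ->
  @locfrac U (fun q hq => mulC q (s q hq) (t q hq)).
Proof.
move=> hs ht p hp.
case: (hs p hp) => h1 [a1 [f1 [hp1 H1]]]; case: (ht p hp) => h2 [a2 [f2 [hp2 H2]]].
exists (h1 * h2), (a1 * a2), (f1 * f2); split; first exact: prime_mul.
move=> q hq.
case: (H1 q (prime_mulL hq)) => Uq [qf1 e1]; case: (H2 q (prime_mulR hq)) => _ [qf2 e2].
split=> //; split; first exact: prime_mul.
by move=> hq'; rewrite e1 e2 mulC_cls.
Qed.

Lemma locfrac_res U V (hV : zar_open V) (hVU : forall q, V q -> U q) s :
  @locfrac U s -> @locfrac V (fun q hq => s q (hVU q hq)).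
Proof.
move=> hs p hp; case: hV => S HS; case: (proj1 (HS p) hp) => h0 [Sh0 hph0].
case: (hs p (hVU p hp)) => h [a [f [hph H]]].
exists (h * h0), a, f; split; first exact: prime_mul.
move=> q hq; case: (H q (prime_mulL hq)) => _ [qf e].
split; first by apply/HS; exists h0; split=> //; exact: prime_mulR hq.
by split=> // hq'; rewrite e.
Qed.

Definition sec_const U (hU : zar_open U) (a : A) : SecA U :=
  exist _ _ (locfrac_const hU a).

Definition sec_mul U (s t : SecA U) : SecA U :=
  exist _ _ (locfrac_mul (svalP s) (svalP t)).

Definition sec_res U V (hV : zar_open V) (hVU : forall q, V q -> U q)
  (s : SecA U) : SecA V := exist _ _ (locfrac_res hV hVU (svalP s)).

Definition SecA_hrd (U : SpecPt -> Prop) (hU : zar_open U) : HRData :=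
  {| hr_car := SecA U;
     hr_add := fun s t u => forall p (hp : U p),
                 sval u p hp = addC p (sval s p hp) (sval t p hp);
     hr_zero := sec_const hU 0; hr_one := sec_const hU 1;
     hr_mul := @sec_mul U |}.

Lemma zar_open_full : zar_open (fun _ => True).
Proof. exists (fun s => s = 1) => p; split=> // _; exists 1; split=> //; exact: prime_one. Qed.

End SpecRing.

Definition SpecA (A : comPzRingType) : HSpace :=
  {| hs_pt := SpecPt A;
     hs_open := @zar_open A;
     hs_sec := @SecA_hrd A;
     hs_res := fun U V _ hV hVU (s : SecA_hrd _) => (sec_res hV hVU s : SecA_hrd hV) |}.

Definition canon (A : comPzRingType) (a : A) : hs_sec (SpecA A) _ (@zar_open_full A) :=
  sec_const (@zar_open_full A) a.

(* Global sections of a morphism Spec H -> Spec A, read as a map A -> H: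
   A -> O_X(X) -> O_{Spec H}(f^-1 X) = O_{Spec H}({y}) = H. *)
Definition glob_map (H : HRData) (A : comPzRingType)
  (m : LhsHom (SpecH H) (SpecA A)) (a : A) : H :=
  (mor_sh m (@zar_open_full A) (canon a) : fun_hrd True H) I.

(* A morphism Spec H -> Spec A is a point p of Spec A together with maps on
   sections.  Locality at the unique point of Spec H forces p to be the kernel
   of the global-sections map g : A -> H, and since every section s is, near p,
   a fraction a/f with f notin p, the relation s * f = a on that neighbourhood
   forces the value of s to be g(a) g(f)^-1.  Conversely, for any homomorphism
   g : A -> H, its kernel p is prime because H is a hyperfield, and
   a/f |-> g(a) g(f)^-1 is a well-defined local hyperring homomorphism from
   each stalk at p to H, which defines a morphism of locally hyperringed spaces
   with global-sections map g. *)
From mathcomp Require Import all_boot all_algebra.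
From Stdlib Require Import Classical ClassicalEpsilon ProofIrrelevance.
From Stdlib Require Import FunctionalExtensionality PropExtensionality.
Set Implicit Arguments.
Unset Strict Implicit.
Unset Printing Implicit Defensive.
Import GRing.Theory.

Local Open Scope ring_scope.

Section Hyperfield.
Variable H : HRData.
Hypothesis hH : is_hyperfield H.
Local Notation "x ** y" := (@hr_mul H x y) (at level 40).
Local Notation O := (@hr_zero H).
Local Notation I1 := (@hr_one H).

Lemma hmulA (x y z : H) : x ** (y ** z) = (x ** y) ** z.
Proof. by case: hH => [[_ [_ [_ [_ [_ [_ [h _]]]]]]] _]. Qed.

Lemma hmulC (x y : H) : x ** y = y ** x.
Proof. by case: hH => [[_ [_ [_ [_ [_ [_ [_ [h _]]]]]]]] _]. Qed.

Lemma hmul1r (x : H) : I1 ** x = x.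
Proof. by case: hH => [[_ [_ [_ [_ [_ [_ [_ [_ [h _]]]]]]]]] _]. Qed.

Lemma hdistr (x y z u : H) : hr_add y z u -> hr_add (x ** y) (x ** z) (x ** u).
Proof.
case: hH => [[_ [_ [_ [_ [_ [_ [_ [_ [_ [h _]]]]]]]]]] _] yzu.
by apply/h; exists u.
Qed.

Lemma hmulr0 (x : H) : x ** O = O.
Proof. by case: hH => [[_ [_ [_ [_ [_ [_ [_ [_ [_ [_ h]]]]]]]]]] _]. Qed.

Lemma hadd0_eq (x z : H) : hr_add O x z -> z = x.
Proof. by case: hH => [[_ [_ [_ [h _]]]] _] /h. Qed.

Lemma hone_neq0 : I1 <> O.
Proof. by case: hH => [_ [h _]]. Qed.

Lemma hmulr1 (x : H) : x ** I1 = x.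
Proof. by rewrite hmulC hmul1r. Qed.

Lemma hmul0r (x : H) : O ** x = O.
Proof. by rewrite hmulC hmulr0. Qed.

Lemma hmulACA (a b c d : H) : (a ** b) ** (c ** d) = (a ** c) ** (b ** d).
Proof.
rewrite -!hmulA; congr (a ** _); rewrite !hmulA; congr (_ ** d); exact: hmulC.
Qed.

(* [hinv O] is an unspecified element of [H]. *)
Definition hinv (x : H) : H := epsilon (inhabits O) (fun y => x ** y = I1).

Lemma hmulfV (x : H) : x <> O -> x ** hinv x = I1.
Proof.
case: hH => [_ [_ hinv_ex]] /hinv_ex x_unit.
exact: (epsilon_spec (inhabits O) (fun y => x ** y = I1) x_unit).
Qed.

Lemma hmul_eq0 (x y : H) : x ** y = O -> x = O \/ y = O.
Proof.
move=> xy0; case: (classic (x = O)) => x0; [by left | right].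
by rewrite -[y]hmul1r -(hmulfV x0) (hmulC x) -hmulA xy0 hmulr0.
Qed.

Lemma hinv_neq0 (x : H) : x <> O -> hinv x <> O.
Proof. by move=> x0 ix0; apply: hone_neq0; rewrite -(hmulfV x0) ix0 hmulr0. Qed.

Lemma hinv_eq (x y : H) : x ** y = I1 -> hinv x = y.
Proof.
move=> xy1; have x0 : x <> O by move=> x0; apply: hone_neq0; rewrite -xy1 x0 hmul0r.
by rewrite -[hinv x]hmulr1 -xy1 hmulA (hmulC _ x) hmulfV // hmul1r.
Qed.

Lemma hinvM (x y : H) : x <> O -> y <> O -> hinv (x ** y) = hinv x ** hinv y.
Proof. by move=> x0 y0; apply: hinv_eq; rewrite hmulACA !hmulfV // hmul1r. Qed.

Lemma hinv1 : hinv I1 = I1.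
Proof. by apply: hinv_eq; rewrite hmul1r. Qed.

Lemma hfrac_eq (a b c d : H) : b <> O -> d <> O -> a ** d = c ** b ->
  a ** hinv b = c ** hinv d.
Proof.
move=> b0 d0 ad_cb.
rewrite -[a ** hinv b]hmulr1 -(hmulfV d0) hmulACA ad_cb (hmulC (hinv b)) hmulACA.
by rewrite hmulfV // hmulr1.
Qed.

Lemma hfrac_mul (a b c d : H) : b <> O -> d <> O ->
  (a ** hinv b) ** (c ** hinv d) = (a ** c) ** hinv (b ** d).
Proof. by move=> b0 d0; rewrite hinvM // hmulACA. Qed.

Lemma hfrac_add (a b c d w : H) : b <> O -> d <> O ->
  hr_add (a ** d) (c ** b) w ->
  hr_add (a ** hinv b) (c ** hinv d) (w ** hinv (b ** d)).
Proof.
move=> b0 d0 /(hdistr (hinv (b ** d))).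
have ad : hinv b ** hinv d ** (a ** d) = a ** hinv b.
  by rewrite hmulACA (hmulC (hinv d)) hmulfV // hmulr1 hmulC.
have cb : hinv b ** hinv d ** (c ** b) = c ** hinv d.
  by rewrite (hmulC c) hmulACA (hmulC (hinv b)) hmulfV // hmul1r hmulC.
by rewrite (hmulC w) (hinvM b0 d0) ad cb.
Qed.

Lemma hfrac_neq0 (a b : H) : b <> O -> (a ** hinv b <> O <-> a <> O).
Proof.
move=> b0; split=> [ab0 a0 | a0 /hmul_eq0 [//|]]; last exact: hinv_neq0.
by apply: ab0; rewrite a0 hmul0r.
Qed.

End Hyperfield.

Lemma is_hr_hom_comp (R S T : HRData) (f : R -> S) (g : S -> T) :
  is_hr_hom f -> is_hr_hom g -> is_hr_hom (fun x => g (f x)).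
Proof.
move=> [f0 [f1 [fM fD]]] [g0 [g1 [gM gD]]].
split; first by rewrite f0 g0. split; first by rewrite f1 g1.
split=> [x y | x y z xyz]; first by rewrite fM gM.
exact/gD/fD.
Qed.

Lemma fun_hrd_eval_hom (P : Prop) (H : HRData) (hP : P) :
  is_hr_hom (fun s : fun_hrd P H => s hP).
Proof. by split=> //; split=> //; split=> // s t u; apply. Qed.

Section SpecRing.
Variable A : comPzRingType.
Implicit Types (p q : SpecPt A) (a b f e u x y : A).

Lemma in_prime0 p : sval p 0.
Proof. by case: p => P /= []. Qed.

Lemma in_primeD p x y : sval p x -> sval p y -> sval p (x + y).
Proof. by case: p => P /= [_ [hD _]]; apply: hD. Qed.

Lemma in_primeMl p a x : sval p x -> sval p (a * x).
Proof. by case: p => P /= [_ [_ [hM _]]]; apply: hM. Qed.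

Lemma in_primeMr p a x : sval p x -> sval p (x * a).
Proof. by rewrite mulrC; apply: in_primeMl. Qed.

Lemma in_primeM p x y : sval p (x * y) -> sval p x \/ sval p y.
Proof. by case: p => P /= [_ [_ [_ [_ hM]]]]; apply: hM. Qed.

Lemma in_prime_sub_ann p u x y : ~ sval p u -> u * (x - y) = 0 ->
  (sval p x <-> sval p y).
Proof.
move=> pu uxy0.
have pxy : sval p (x - y).
  by have /in_primeM [] : sval p (u * (x - y)) by rewrite uxy0; apply: in_prime0.
split=> [px | py]; last by rewrite -(subrK y x); apply: in_primeD.
have -> : y = x + - (x - y) by rewrite opprB addrC subrK.
by apply: in_primeD => //; rewrite -mulN1r; apply: in_primeMl.
Qed.

Definition basic_open (k : A) (q : SpecPt A) : Prop := ~ sval q k.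

Lemma zar_open_basic (k : A) : zar_open (basic_open k).
Proof. by exists (fun x => x = k) => q; split; [exists k | case=> x [->]]. Qed.

Lemma cls_eq_of_eqv p a f a' f' : frac_eqv p (a, f) (a', f') -> cls p a f = cls p a' f'.
Proof.
move=> af_a'f'; apply: functional_extensionality => z; apply: propositional_extensionality.
by split; [apply: eqv_trans; apply: eqv_sym | apply: eqv_trans].
Qed.

Lemma eqv_of_cls_eq p a f a' f' : ~ sval p f' -> cls p a f = cls p a' f' ->
  frac_eqv p (a, f) (a', f').
Proof. by move=> pf' af_a'f'; change (cls p a f (a', f')); rewrite af_a'f'; apply: eqv_refl. Qed.

Lemma cls_mulr p a f c : ~ sval p f -> ~ sval p c -> cls p (a * c) (f * c) = cls p a f.
Proof.
move=> pf pc; apply: cls_eq_of_eqv; split; first exact: prime_mul.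
split=> //; exists 1; split; first exact: prime_one.
by rewrite /= mul1r -mulrA [f * c]mulrC mulrA subrr.
Qed.

Lemma addC_cls p a f b g : ~ sval p f -> ~ sval p g ->
  addC p (cls p a f) (cls p b g) = cls p (a * g + b * f) (f * g).
Proof.
move=> pf pg; apply: functional_extensionality => x; apply: propositional_extensionality.
split=> [[a' [f' [b' [g' [af [bg x_eqv]]]]]] | x_eqv].
  exact: eqv_trans (eqv_add af bg) x_eqv.
by exists a, f, b, g; split; [apply: eqv_refl | split; first apply: eqv_refl].
Qed.

Lemma sec_ext U (s t : SecA U) : (forall q hq, sval s q hq = sval t q hq) -> s = t.
Proof.
case: s t => [s hs] [t ht] /= st.
have {}st : s = t.
  by apply: functional_extensionality_dep => q; apply: functional_extensionality_dep.
by subst t; congr exist; apply: proof_irrelevance.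
Qed.

Lemma sec_rep U (s : SecA U) p (hp : U p) :
  exists a f, ~ sval p f /\ sval s p hp = cls p a f.
Proof.
have [k [a [f [pk Hs]]]] := svalP s p hp; have [_ [pf sp]] := Hs p pk.
by exists a, f.
Qed.

Lemma unit_near_notin U (hU : zar_open U) p (hp : U p) (s : SecA_hrd hU) a f :
  ~ sval p f -> sval s p hp = cls p a f ->
  unit_near (SpecA A) U p hU s -> ~ sval p a.
Proof.
move=> pf sp [W [hW [hWU [Wp [t st1]]]]] pa.
have := f_equal (fun r : SecA W => sval r p Wp) st1.
rewrite /= (proof_irrelevance _ (hWU p Wp) hp) sp.
have [b [e [pe tp]]] := sec_rep t Wp.
rewrite tp mulC_cls // => /(eqv_of_cls_eq (@prime_one _ p)) [_ [_ [u [pu /=]]]].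
rewrite mulr1 mul1r => /(in_prime_sub_ann pu) [/(_ (in_primeMr b pa)) pfe _].
exact: prime_mul pf pe pfe.
Qed.

Lemma notin_unit_near U (hU : zar_open U) p (hp : U p) (s : SecA_hrd hU) a f :
  ~ sval p f -> sval s p hp = cls p a f ->
  ~ sval p a -> unit_near (SpecA A) U p hU s.
Proof.
move=> pf sp pa.
have [h [a' [f' [ph Hs]]]] := svalP s p hp; have [_ [pf' sp']] := Hs p ph.
have [_ [_ [u [pu /= eu]]]] := eqv_of_cls_eq pf' (etrans (esym sp) (sp' hp)).
have pa' : ~ sval p a'.
  move=> pa'; have /(in_prime_sub_ann pu eu) /in_primeM [] // := in_primeMr f pa'.
have hWU q : basic_open (h * a') q -> U q by move/prime_mulL/Hs => [].
have ht : locfrac (fun q (_ : basic_open (h * a') q) => cls q f' a').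
  move=> q Wq; exists (h * a'), f', a'; split=> // q' Wq'.
  by do 2 split=> //; apply: prime_mulR Wq'.
exists (basic_open (h * a')), (zar_open_basic _), hWU; split; first exact: prime_mul.
exists (exist _ _ ht); apply: sec_ext => q Wq /=.
have [_ [qf' ->]] := Hs q (prime_mulL Wq); have qa' := prime_mulR Wq.
rewrite mulC_cls // [a' * f']mulrC -[f' * a']mul1r cls_mulr //; first exact: prime_one.
exact: prime_mul.
Qed.

Lemma unit_near_cls U (hU : zar_open U) p (hp : U p) (s : SecA_hrd hU) a f :
  ~ sval p f -> sval s p hp = cls p a f ->
  (unit_near (SpecA A) U p hU s <-> ~ sval p a).
Proof.
by move=> pf sp; split; [apply: unit_near_notin sp | apply: notin_unit_near sp].
Qed.

Lemma res_mul_canon U (hU : zar_open U) (s : SecA_hrd hU) k a f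
    (hkU : forall q, basic_open k q -> U q) :
  (forall q, basic_open k q ->
     U q /\ ~ sval q f /\ forall hq : U q, sval s q hq = cls q a f) ->
  let res V (hV : zar_open V) (hkV : forall q, basic_open k q -> V q)
        (t : SecA_hrd hV) := hs_res (h := SpecA A) V _ hV (zar_open_basic k) hkV t in
  hr_mul (res _ _ hkU s) (res _ _ (fun _ _ => I) (canon f)) =
  res _ _ (fun _ _ => I) (canon a).
Proof.
move=> Hs res; apply: sec_ext => q kq /=.
have [_ [qf ->]] := Hs q kq; have q1 := @prime_one _ q.
by rewrite mulC_cls // [f * 1]mulrC cls_mulr.
Qed.

Lemma canon_hom : @is_hr_hom (ring_hrd A) (SecA_hrd (zar_open_full A)) (@canon A).
Proof.
have p1 p := @prime_one A p.
split=> //; split=> //; split=> [x y | x y z ->]; first apply: sec_ext => p hp /=.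
- by rewrite mulC_cls ?mulr1.
- by move=> p hp /=; rewrite addC_cls ?mulr1.
Qed.

End SpecRing.

Lemma glob_map_hom (H : HRData) (A : comPzRingType) (m : LhsHom (SpecH H) (SpecA A)) :
  @is_hr_hom (ring_hrd A) H (glob_map m).
Proof.
exact: is_hr_hom_comp (is_hr_hom_comp (canon_hom A) (mor_hom _ _ m _ (zar_open_full A)))
                      (@fun_hrd_eval_hom True H I).
Qed.

Lemma unit_near_SpecH (H : HRData) (hH : is_hyperfield H) (V : unit -> Prop)
  (hV : hs_open (h := SpecH H) V) (t : fun_hrd (V tt) H) (hv : V tt) :
  unit_near (SpecH H) V tt hV t <-> t hv <> hr_zero.
Proof.
split=> [[W [hW [hWV [Wt [t' tt'1]]]]] t0 | t0].
  have := f_equal (fun F : fun_hrd (W tt) H => F Wt) tt'1.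
  rewrite /= (proof_irrelevance _ (hWV tt Wt) hv) t0 (hmul0r hH).
  exact/nesym/(hone_neq0 hH).
exists V, hV, (fun _ hv => hv); split=> //.
exists (fun _ => hinv (t hv)); apply: functional_extensionality => hv' /=.
by rewrite (proof_irrelevance _ hv' hv) (hmulfV hH).
Qed.

Lemma lhs_ext (H : HRData) (A : comPzRingType) (m1 m2 : LhsHom (SpecH H) (SpecA A)) :
  mor_pt m1 tt = mor_pt m2 tt ->
  (forall U (hU : zar_open U) (s : SecA_hrd hU)
     (h1 : U (mor_pt m1 tt)) (h2 : U (mor_pt m2 tt)),
     (mor_sh m1 hU s : fun_hrd _ H) h1 = (mor_sh m2 hU s : fun_hrd _ H) h2) ->
  m1 = m2.
Proof.
case: m1 m2 => [pt1 c1 sh1 hom1 nat1 loc1] [pt2 c2 sh2 hom2 nat2 loc2] /= pt12 sh12.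
have {}pt12 : pt1 = pt2 by apply: functional_extensionality => -[].
subst pt2; have <- : c1 = c2 by apply: proof_irrelevance.
have {}sh12 : sh1 = sh2.
  do 4 apply: functional_extensionality_dep => ?.
  exact: sh12.
by subst sh2; congr Build_LhsHom; apply: proof_irrelevance.
Qed.

Section HomToHyperfield.
Variables (H : HRData) (A : comPzRingType) (g : A -> H).
Hypotheses (hH : is_hyperfield H) (hg : @is_hr_hom (ring_hrd A) H g).
Local Notation "x ** y" := (@hr_mul H x y) (at level 40).
Local Notation O := (@hr_zero H).
Local Notation I1 := (@hr_one H).

Lemma hom0 : g 0 = O. Proof. by case: hg. Qed.
Lemma hom1 : g 1 = I1. Proof. by case: hg => _ []. Qed.
Lemma homM x y : g (x * y) = g x ** g y. Proof. by case: hg => _ [_ [hM _]]; apply: hM. Qed.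
Lemma homD x y : hr_add (g x) (g y) (g (x + y)). Proof. by case: hg => _ [_ [_ hD]]; apply: hD. Qed.

Lemma hom_sub_eq0 x y : g (x - y) = O -> g x = g y.
Proof. by move=> gxy0; have := homD (x - y) y; rewrite gxy0 subrK => /(hadd0_eq hH). Qed.

Lemma hom_ker_prime : prime_ideal (fun a => g a = O).
Proof.
split; first exact: hom0.
split; first by move=> x y gx0 gy0; have := homD x y; rewrite gx0 => /(hadd0_eq hH) ->.
split; first by move=> a x gx0; rewrite homM gx0 (hmulr0 hH).
split; first by rewrite hom1; apply: (hone_neq0 hH).
by move=> x y; rewrite homM => /(hmul_eq0 hH).
Qed.

Definition ker_pt : SpecPt A := exist _ _ hom_ker_prime.

Definition frac_eval (C : A * A -> Prop) : H :=
  let x := epsilon (inhabits (0, 1)) C in g x.1 ** hinv (g x.2).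

Section KernelPoint.
Variable p : SpecPt A.
Hypothesis p_ker : forall x, sval p x <-> g x = O.

Lemma hom_frac_eqv a f a' f' : frac_eqv p (a, f) (a', f') -> g a ** g f' = g a' ** g f.
Proof.
move=> [_ [_ [u [pu /= eu]]]]; rewrite -!homM; apply: hom_sub_eq0.
have : g u ** g (a * f' - a' * f) = O by rewrite -homM eu hom0.
by case/(hmul_eq0 hH) => // /p_ker.
Qed.

Lemma frac_eval_cls a f : ~ sval p f -> frac_eval (cls p a f) = g a ** hinv (g f).
Proof.
move=> pf; rewrite /frac_eval.
have := epsilon_spec (inhabits (0, 1)) (cls p a f) (ex_intro _ (a, f) (eqv_refl a pf)).
case: (epsilon _ _) => a' f' af_a'f' /=.
have pf' : ~ sval p f' by case: af_a'f' => _ [].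
by symmetry; apply: (hfrac_eq hH); [move/p_ker | move/p_ker | apply: hom_frac_eqv].
Qed.

End KernelPoint.

Lemma ker_pt_spec x : sval ker_pt x <-> g x = O. Proof. by []. Qed.

Definition sec_eval U (hU : zar_open U) (s : SecA_hrd hU) :
  hs_sec (SpecH H) (fun _ => U ker_pt) I :=
  (fun h : U ker_pt => frac_eval (sval s ker_pt h)) : fun_hrd (U ker_pt) H.

Lemma sec_eval_cls U (hU : zar_open U) (s : SecA_hrd hU) (h : U ker_pt) a f :
  ~ sval ker_pt f -> sval s ker_pt h = cls ker_pt a f ->
  (sec_eval s : fun_hrd _ H) h = g a ** hinv (g f).
Proof. by move=> pf sp; rewrite /sec_eval /= sp (frac_eval_cls ker_pt_spec). Qed.

Lemma sec_eval_hom U (hU : zar_open U) : is_hr_hom (@sec_eval U hU).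
Proof.
have p1 := @prime_one _ ker_pt.
split; first apply: functional_extensionality => h.
  by rewrite (@sec_eval_cls _ _ _ _ 0 1) // hom0 (hmul0r hH).
split; first apply: functional_extensionality => h.
  by rewrite (@sec_eval_cls _ _ _ _ 1 1) // hom1 (hinv1 hH) (hmul1r hH).
split=> [s t | s t u stu]; [apply: functional_extensionality|] => h;
  have [a [f [pf sp]]] := sec_rep s h; have [b [e [pe tp]]] := sec_rep t h;
  have gf : g f <> O by move/ker_pt_spec.
all: have ge : g e <> O by move/ker_pt_spec.
all: rewrite /= (sec_eval_cls pf sp) (sec_eval_cls pe tp).
  rewrite (hfrac_mul hH) // -!homM; apply: sec_eval_cls; first exact: prime_mul.
  by rewrite /= sp tp mulC_cls.
rewrite (@sec_eval_cls _ _ _ _ (a * e + b * f) (f * e)); first last.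
- by rewrite stu sp tp addC_cls.
- exact: prime_mul.
by have := homD (a * e) (b * f); rewrite !homM => /(hfrac_add hH gf ge).
Qed.

Lemma sec_eval_local U (hU : zar_open U) (s : SecA_hrd hU) (hp : U ker_pt) :
  unit_near (SpecA A) U ker_pt hU s <->
  unit_near (SpecH H) (fun _ => U ker_pt) tt I (sec_eval s).
Proof.
have [a [f [pf sp]]] := sec_rep s hp.
have gf : g f <> O by move/ker_pt_spec.
by rewrite (unit_near_cls pf sp) (unit_near_SpecH hH _ _ hp) (sec_eval_cls pf sp) (hfrac_neq0 hH).
Qed.

Definition lhs_of_hom : LhsHom (SpecH H) (SpecA A) :=
  @Build_LhsHom (SpecH H) (SpecA A) (fun _ => ker_pt) (fun _ _ => I) sec_eval
    sec_eval_hom (fun _ _ _ _ _ _ => erefl) (fun '(tt) _ _ s hp => sec_eval_local s hp).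

Lemma glob_map_lhs_of_hom a : glob_map lhs_of_hom a = g a.
Proof.
rewrite /glob_map /= (@sec_eval_cls _ _ _ _ a 1) ?hom1 ?(hinv1 hH) ?(hmulr1 hH) //.
exact: prime_one.
Qed.

Section Uniqueness.
Variable m : LhsHom (SpecH H) (SpecA A).
Hypothesis m_glob : forall a, glob_map m a = g a.

Lemma mor_pt_ker x : sval (mor_pt m tt) x <-> g x = O.
Proof.
have := mor_local _ _ m tt _ (zar_open_full A) (canon x) I.
rewrite (@unit_near_cls _ _ _ _ I (canon x) x 1 (@prime_one _ _) (erefl _)).
rewrite (unit_near_SpecH hH _ _ I) -/(glob_map m x) m_glob.
by case=> gx0 px0; split=> ?; apply: NNPP => ?; [apply: px0 | apply: gx0].
Qed.

Lemma mor_pt_eq : mor_pt m tt = ker_pt.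
Proof.
move: (mor_pt m tt) mor_pt_ker => [P hP] /= P_ker.
have eP : P = fun a => g a = O.
  by apply: functional_extensionality => x; apply: propositional_extensionality.
by subst P; congr exist; apply: proof_irrelevance.
Qed.

Lemma mor_sh_val U (hU : zar_open U) (s : SecA_hrd hU) (h : U (mor_pt m tt)) :
  (mor_sh m hU s : fun_hrd _ H) h = frac_eval (sval s (mor_pt m tt) h).
Proof.
set q := mor_pt m tt in h *.
have [k [a [f [qk Hs]]]] := svalP s q h.
have hkU q' : basic_open k q' -> U q' by case/Hs.
have [_ [qf sq]] := Hs q qk.
have gf : g f <> O by move/mor_pt_ker.
have [_ [_ [hM _]]] := mor_hom _ _ m _ (zar_open_basic k).
have := f_equal (mor_sh m (zar_open_basic k)) (res_mul_canon hkU Hs).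
rewrite hM !mor_nat => /(f_equal (fun F : fun_hrd (basic_open k q) H => F qk)) /=.
rewrite -/(glob_map m f) -/(glob_map m a) !m_glob (proof_irrelevance _ (hkU q qk) h).
rewrite sq (frac_eval_cls mor_pt_ker _ qf) => <-.
by rewrite -(hmulA hH) (hmulfV hH) ?(hmulr1 hH).
Qed.

End Uniqueness.

Lemma lhs_of_hom_unique (m : LhsHom (SpecH H) (SpecA A)) :
  (forall a, glob_map m a = g a) -> m = lhs_of_hom.
Proof.
move=> m_glob; apply: lhs_ext => [|U hU s h1 h2]; first exact: mor_pt_eq.
rewrite mor_sh_val //=; move: h1; rewrite mor_pt_eq // => h1.
by rewrite (proof_irrelevance _ h1 h2).
Qed.

End HomToHyperfield.

Theorem proposition3p14 (H : HRData) (hH : is_hyperfield H) (A : comPzRingType) :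
  (forall m : LhsHom (SpecH H) (SpecA A),
      @is_hr_hom (ring_hrd A) H (glob_map m)) /\
  (forall g : A -> H, @is_hr_hom (ring_hrd A) H g ->
      exists! m : LhsHom (SpecH H) (SpecA A), forall a : A, glob_map m a = g a).
Proof.
split=> [m | g hg]; first exact: glob_map_hom.
exists (lhs_of_hom hH hg); split=> [|m m_glob]; first exact: glob_map_lhs_of_hom.
by rewrite (lhs_of_hom_unique hH hg m_glob).
Qed.
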